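(* Let $\mathcal{S}$ be a state space and let $\mathsf{M}^{(1)},\mathsf{M}^{(2)}$ be measurements on $\mathcal{S}$ with $m_1$ and $m_2$ outcomes respectively. If $$\lambda_{max}(\mathsf{H}^{(1,2)})>\frac{\lambda_{max}(\mathcal{S})+m_1m_2}{m_1+m_2},$$ then $\mathsf{M}^{(1)}$ and $\mathsf{M}^{(2)}$ are incompatible.
   Context: General probabilistic theory setting: a state space $\mathcal{S}$ is a compact convex subset of a finite-dimensional real vector space, embedded as a base of a closed generating proper cone in a vector space $V$, with unit effect $u$. Effects are linear functionals $e$ on $V$ with $0\le e\le1$ on $\mathcal{S}$; $\|f\|=\max_{s\in\mathcal{S}}|f(s)|$. A measurement with finite outcome set $\Omega$ is a map $x\mapsto\mathsf{M}_x$ to effects with $\sum_x\mathsf{M}_x=u$; its decoding power is $\lambda_{max}(\mathsf{M})=\sum_x\|\mathsf{M}_x\|$, and $\lambda_{max}(\mathcal{S})$ is the supremum of $\lambda_{max}(\mathsf{M})$ over all measurements on $\mathcal{S}$ with finite outcome sets. $\mathsf{M}^{(1)}$ (outcomes $\Omega_1$) and $\mathsf{M}^{(2)}$ (outcomes $\Omega_2$) are compatible if there is a measurement $\mathsf{J}$ with outcome set $\Omega_1\times\Omega_2$ with $\sum_y\mathsf{J}_{x,y}=\mathsf{M}^{(1)}_x$ and $\sum_x\mathsf{J}_{x,y}=\mathsf{M}^{(2)}_y$, and incompatible otherwise. The harmonic approximate joint measurement $\mathsf{H}^{(1,2)}$ has outcome set $\Omega_1\times\Omega_2$ and effects $\mathsf{H}^{(1,2)}_{x,y}=\frac{1}{m_1+m_2}(\mathsf{M}^{(1)}_x+\mathsf{M}^{(2)}_y)$.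 *)

From HB Require Import structures.
From mathcomp Require Import all_boot all_order all_algebra.
From mathcomp Require Import all_classical all_reals all_analysis.
Set Implicit Arguments. Unset Strict Implicit. Unset Printing Implicit Defensive.
Import Order.TTheory GRing.Theory Num.Theory.
Import numFieldNormedType.Exports.
Local Open Scope classical_set_scope.
Local Open Scope ring_scope.

(* The ambient vector space V is R^n, realised as row vectors 'rV[R]_n.
   Linear functionals on V are represented by column vectors 'cV[R]_n,
   acting by  ev e s = s *m e. *)
Definition ev {R : realType} {n : nat} (e : 'cV[R]_n) (s : 'rV[R]_n) : R :=
  (s *m e) 0 0.

Definition gen_cone {R : realType} {n : nat} (S : set 'rV[R]_n) : set 'rV[R]_n :=
  [set v | exists t : R, exists s, 0 <= t /\ S s /\ v = t *: s].

Definition convex_subset {R : realType} {n : nat} (S : set 'rV[R]_n) : Prop :=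
  forall s t (l : R), S s -> S t -> 0 <= l <= 1 -> S (l *: s + (1 - l) *: t).

(* S is a state space with unit effect u: a nonempty compact convex subset of V
   which is the base { c in C | u c = 1 } of the closed, generating, proper cone
   C generated by S. *)
Definition state_space {R : realType} {n : nat} (S : set 'rV[R]_n) (u : 'cV[R]_n)
  : Prop :=
  [/\ S !=set0, compact S, convex_subset S & (forall s, S s -> ev u s = 1)] /\
  [/\ closed (gen_cone S),
      (forall v, exists a b, gen_cone S a /\ gen_cone S b /\ v = a - b) &
      (forall v, gen_cone S v -> gen_cone S (- v) -> v = 0)].

Definition is_effect {R : realType} {n : nat} (S : set 'rV[R]_n) (e : 'cV[R]_n)
  : Prop := forall s, S s -> 0 <= ev e s <= 1.

Definition is_measurement {R : realType} {n : nat} (S : set 'rV[R]_n)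
  (u : 'cV[R]_n) {Omega : finType} (M : Omega -> 'cV[R]_n) : Prop :=
  (forall x, is_effect S (M x)) /\ \sum_(x : Omega) M x = u.

(* ||f|| = max_{s in S} |f(s)| (a max since S is compact and nonempty). *)
Definition fnorm {R : realType} {n : nat} (S : set 'rV[R]_n) (f : 'cV[R]_n) : R :=
  sup [set `|ev f s| | s in S].

Definition decoding_power {R : realType} {n : nat} (S : set 'rV[R]_n)
  {Omega : finType} (M : Omega -> 'cV[R]_n) : R :=
  \sum_(x : Omega) fnorm S (M x).

(* lambda_max(S): supremum over all measurements with finite outcome sets
   (extended-real valued, so no finiteness is presupposed). *)
Definition lambda_max_S {R : realType} {n : nat} (S : set 'rV[R]_n)
  (u : 'cV[R]_n) : \bar R :=
  ereal_sup [set r : \bar R | exists (Omega : finType) (M : Omega -> 'cV[R]_n),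
    is_measurement S u M /\ r = (decoding_power S M)%:E].

Definition compatible {R : realType} {n : nat} (S : set 'rV[R]_n) (u : 'cV[R]_n)
  {O1 O2 : finType} (M1 : O1 -> 'cV[R]_n) (M2 : O2 -> 'cV[R]_n) : Prop :=
  exists J : O1 * O2 -> 'cV[R]_n,
    [/\ is_measurement S u J,
        (forall x, \sum_(y : O2) J (x, y) = M1 x) &
        (forall y, \sum_(x : O1) J (x, y) = M2 y)].

Definition harmonic_ajm {R : realType} {n m1 m2 : nat}
  (M1 : 'I_m1 -> 'cV[R]_n) (M2 : 'I_m2 -> 'cV[R]_n) : 'I_m1 * 'I_m2 -> 'cV[R]_n :=
  fun xy => ((m1 + m2)%:R)^-1 *: (M1 xy.1 + M2 xy.2).

(* A joint measurement J of M1 and M2 satisfies, pointwise on states,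
   M1_x + M2_y = J_(x,y) + (mass of the outcomes (x,y') and (x',y) other than (x,y))
   <= J_(x,y) + 1, so ||H_(x,y)|| <= (||J_(x,y)|| + 1) / (m1 + m2).  Summing over
   the m1 m2 outcomes bounds lambda_max(H) by (lambda_max(J) + m1 m2) / (m1 + m2),
   and lambda_max(J) <= lambda_max(S). *)
From HB Require Import structures.
From mathcomp Require Import all_boot all_order all_algebra.
From mathcomp Require Import all_classical all_reals all_analysis.
Import Order.TTheory GRing.Theory Num.Theory.
Import numFieldNormedType.Exports.
Local Open Scope ring_scope.

Lemma sum_marginals_le {R : numDomainType} {I1 I2 : finType}
    (a : I1 -> I2 -> R) (x : I1) (y : I2) :
  (forall i j, 0 <= a i j) -> \sum_i \sum_j a i j = 1 ->
  \sum_j a x j + \sum_i a i y <= a x y + 1.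
Proof.
move=> a_ge0 <-.
rewrite [X in _ <= _ + X](bigD1 x) //= [X in _ + X <= _](bigD1 x) //=.
rewrite addrCA !lerD2l; apply: ler_sum => i _.
by rewrite (bigD1 y) //= lerDl sumr_ge0.
Qed.

Section Effects.
Context {R : realType} {n : nat}.
Implicit Types (S : set 'rV[R]_n) (e f : 'cV[R]_n) (s : 'rV[R]_n).

Lemma evD f e s : ev (f + e) s = ev f s + ev e s.
Proof. by rewrite /ev mulmxDr mxE. Qed.

Lemma evZ (c : R) f s : ev (c *: f) s = c * ev f s.
Proof. by rewrite /ev -scalemxAr mxE. Qed.

Lemma ev_sum (I : finType) (F : I -> 'cV[R]_n) s :
  ev (\sum_i F i) s = \sum_i ev (F i) s.
Proof. by rewrite /ev mulmx_sumr summxE. Qed.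

Lemma effect_ev_le_fnorm S e s : is_effect S e -> S s -> ev e s <= fnorm S e.
Proof.
move=> e_eff Ss; apply: le_trans (ler_norm _) _; apply: ub_le_sup; last by exists s.
exists 1 => _ [t St <-]; have /andP[e_ge0 e_le1] := e_eff t St.
by rewrite ger0_norm.
Qed.

Lemma fnorm_le S f (b : R) : (S !=set0)%classic ->
  (forall s, S s -> `|ev f s| <= b) -> fnorm S f <= b.
Proof.
move=> [s0 S0] f_le; apply: ge_sup; first by exists `|ev f s0|, s0.
by move=> _ [s Ss <-]; exact: f_le.
Qed.

Lemma decoding_power_le_lambda_max {S u} {O : finType} {M : O -> 'cV[R]_n} :
  is_measurement S u M -> ((decoding_power S M)%:E <= lambda_max_S S u)%E.
Proof. by move=> M_meas; apply: ereal_sup_ubound; exists O, M. Qed.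

End Effects.

Section HarmonicJointMeasurement.
Context {R : realType} {n m1 m2 : nat} {S : set 'rV[R]_n} {u : 'cV[R]_n}.
Context {M1 : 'I_m1 -> 'cV[R]_n} {M2 : 'I_m2 -> 'cV[R]_n}.
Context {J : 'I_m1 * 'I_m2 -> 'cV[R]_n}.
Hypothesis S_neq0 : (S !=set0)%classic.
Hypothesis u_unit : forall s, S s -> ev u s = 1.
Hypothesis J_meas : is_measurement S u J.
Hypothesis J_marg1 : forall x, \sum_y J (x, y) = M1 x.
Hypothesis J_marg2 : forall y, \sum_x J (x, y) = M2 y.

Let c : R := ((m1 + m2)%:R)^-1.

Lemma fnorm_harmonic_le p :
  fnorm S (harmonic_ajm M1 M2 p) <= c * (fnorm S (J p) + 1).
Proof.
case: p => x y.
have [J_eff J_sum] := J_meas.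
have J_ge0 p s : S s -> 0 <= ev (J p) s by move=> Ss; have /andP[] := J_eff p s Ss.
apply: fnorm_le => // s Ss.
rewrite /harmonic_ajm evZ evD /= -J_marg1 -J_marg2 !ev_sum.
have c_ge0 : 0 <= c by rewrite invr_ge0.
rewrite ger0_norm; last first.
  by rewrite mulr_ge0 // addr_ge0 //; apply: sumr_ge0 => i _; exact: J_ge0.
apply: ler_wpM2l => //.
apply: le_trans (sum_marginals_le (fun x' y' => ev (J (x', y')) s) x y _ _) _.
- by move=> ??; exact: J_ge0.
- rewrite -(u_unit s Ss) -J_sum ev_sum pair_big.
  by apply: eq_bigr => -[].
- by rewrite lerD2r effect_ev_le_fnorm.
Qed.

Lemma decoding_power_harmonic_le :
  decoding_power S (harmonic_ajm M1 M2) <= c * (decoding_power S J + (m1 * m2)%:R).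
Proof.
apply: le_trans (ler_sum _ (fun p _ => fnorm_harmonic_le p)) _.
by rewrite -mulr_sumr big_split /= sumr_const card_prod !card_ord.
Qed.

End HarmonicJointMeasurement.

Theorem corollary1 (R : realType) (n : nat) (S : set 'rV[R]_n) (u : 'cV[R]_n)
  (m1 m2 : nat) (M1 : 'I_m1 -> 'cV[R]_n) (M2 : 'I_m2 -> 'cV[R]_n) :
  state_space S u ->
  is_measurement S u M1 -> is_measurement S u M2 ->
  ((lambda_max_S S u + ((m1 * m2)%:R)%:E) * (((m1 + m2)%:R)^-1)%:E
     < (decoding_power S (harmonic_ajm M1 M2))%:E)%E ->
  ~ compatible S u M1 M2.
Proof.
move=> [[S_neq0 _ _ u_unit] _] _ _ H_large [J [J_meas J_marg1 J_marg2]].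
have J_le := decoding_power_le_lambda_max J_meas.
have H_le := decoding_power_harmonic_le S_neq0 u_unit J_meas J_marg1 J_marg2.
have H_le_lambda : ((decoding_power S (harmonic_ajm M1 M2))%:E
    <= (lambda_max_S S u + ((m1 * m2)%:R)%:E) * (((m1 + m2)%:R)^-1)%:E)%E.
  apply: (@le_trans _ _
    ((decoding_power S J + (m1 * m2)%:R)%:E * (((m1 + m2)%:R)^-1)%:E)%E).
  - by rewrite -EFinM lee_fin mulrC.
  - by apply: lee_wpmul2r; rewrite ?lee_fin ?invr_ge0 // EFinD leeD2r.
by have := lt_le_trans H_large H_le_lambda; rewrite ltxx.
Qed.
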